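(* Let $q$ be a prime power and $k,\delta,\alpha$ positive integers with $k\ge2$, $\alpha\ge3$ and $\delta>\alpha-2$. Then, with $q,k,\delta,\alpha$ fixed and $n\to\infty$, $$B_q(n,k,\delta;\alpha)=O\!\left(q^{\left(1+\frac{1}{\lfloor\alpha/2\rfloor}\right)(k-1)n}\right).$$
   Context: For a prime power $q$, $\mathcal{G}_q(n,k)$ denotes the set of all $k$-dimensional subspaces of $\mathbb{F}_q^n$. An $\alpha$-$(n,k,\delta)_q^c$ covering Grassmannian code is a subset $\mathcal{C}\subseteq\mathcal{G}_q(n,k)$ (no repeated codewords) such that every set of $\alpha$ distinct codewords of $\mathcal{C}$ spans a subspace of $\mathbb{F}_q^n$ of dimension at least $k+\delta$. $B_q(n,k,\delta;\alpha)$ denotes the maximum size of an $\alpha$-$(n,k,\delta)_q^c$ code. The implied constant in $O(\cdot)$ may depend on $q,k,\delta,\alpha$ but not on $n$. *)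

From HB Require Import structures.
From mathcomp Require Import all_boot all_algebra all_field.
From Stdlib Require Import Reals.

Set Implicit Arguments.
Unset Strict Implicit.
Unset Printing Implicit Defensive.

Definition subsp (F : finFieldType) (n : nat) : Type := {vspace 'rV[F]_n}.

(* Over a finite field there are finitely many subspaces: transport the
   finType structure of the underlying matrices (vs2mx is injective). *)
HB.instance Definition _ (F : finFieldType) (n : nat) :=
  Finite.copy (subsp F n) (can_type (@VectorInternalTheory.vs2mxK F 'rV[F]_n)).

Definition grassmannian (F : finFieldType) (n k : nat) : {set subsp F n} :=
  [set U : subsp F n | \dim U == k].

(* alpha-(n,k,delta)_q^c covering Grassmannian code: C is a set (no repeated
   codewords) of k-subspaces such that every alpha distinct codewords span a
   subspace of dimension >= k + delta. *)
Definition is_covering_code (F : finFieldType) (n k delta alpha : nat)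
  (C : {set subsp F n}) : bool :=
  (C \subset grassmannian F n k) &&
  [forall S : {set subsp F n},
     ((S \subset C) && (#|S| == alpha)) ==>
     (k + delta <= \dim (\sum_(V in S) V)%VS)%N].

Definition B_cov (F : finFieldType) (n k delta alpha : nat) : nat :=
  \max_(C : {set subsp F n} | is_covering_code k delta alpha C) #|C|.

From HB Require Import structures.
From mathcomp Require Import all_boot all_algebra all_field.
From Stdlib Require Import Reals.
From mathcomp Require Import zify.
From Stdlib Require Import Lia Lra.
Import ssrnat.

(* View each codeword U as an edge joining two distinct hyperplanes of U, so
   that a code C becomes a multigraph on the (k-1)-subspaces; U is the sum of
   its two endpoints.  Since any alpha codewords span at least
   k + delta >= k - 1 + alpha dimensions, j <= alpha distinct edges of a walk
   through a vertex of degree >= alpha span exactly k - 1 + j dimensions.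
   This forces the non-backtracking walks of length floor(alpha/2) from a
   vertex to end at pairwise distinct vertices.  If |C| > t |G_q(n,k-1)|,
   some nonempty subgraph has minimum degree >= t, so it has at least
   (t-1)^floor(alpha/2) such walks, and hence
   (t-1)^floor(alpha/2) <= |G_q(n,k-1)| <= q^((k-1)n).  Taking t about
   q^((k-1)n/floor(alpha/2)) gives B <= q^((k-1)n) t. *)

Set Implicit Arguments.
Unset Strict Implicit.
Unset Printing Implicit Defensive.

Section Hyperplanes.
Variables (K : fieldType) (vT : vectType K).
Implicit Types U W X Y : {vspace vT}.

Lemma dimv_add_le_succ W X Y : (W <= X)%VS -> (W <= Y)%VS ->
  \dim Y = (\dim W).+1 -> \dim (X + Y) <= (\dim X).+1.
Proof.
move=> WX WY dY; have := dimv_sum_cap X Y.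
have : \dim W <= \dim (X :&: Y) by apply: dimvS; rewrite subv_cap WX WY.
by rewrite dY; lia.
Qed.

Definition basis_hyperplane (i : nat) U : {vspace vT} :=
  <<take i (vbasis U) ++ drop i.+1 (vbasis U)>>%VS.

Lemma basis_hyperplaneP i U : i < \dim U ->
  [/\ (basis_hyperplane i U <= U)%VS, \dim (basis_hyperplane i U) = (\dim U).-1
    & nth (GRing.zero : vT) (tval (vbasis U)) i \notin basis_hyperplane i U].
Proof.
set X := tval (vbasis U) => ltiU.
have sX : size X = \dim U by rewrite size_tuple.
have defX : X = take i X ++ nth (GRing.zero : vT) X i :: drop i.+1 X.
  by rewrite -drop_nth ?cat_take_drop // sX.
have : free (nth (GRing.zero : vT) X i :: (take i X ++ drop i.+1 X)).
  have pX : perm_eq X (nth (GRing.zero : vT) X i :: (take i X ++ drop i.+1 X)).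
    by rewrite {1}defX (perm_catCA _ [:: _]).
  by rewrite -(perm_free pX) (basis_free (vbasisP U)).
rewrite free_cons => /andP [notin /eqP dimY]; split => //.
- rewrite -{2}(span_basis (vbasisP U)); apply: sub_span => x.
  by rewrite mem_cat => /orP [/mem_take | /mem_drop].
- by rewrite /basis_hyperplane dimY size_cat size_take size_drop sX ltiU; lia.
Qed.

Lemma basis_hyperplane01 U : 1 < \dim U ->
  basis_hyperplane 0 U != basis_hyperplane 1 U
  /\ (basis_hyperplane 0 U + basis_hyperplane 1 U)%VS = U.
Proof.
move=> dimU; have [sub0 _ notin0] := basis_hyperplaneP (ltnW dimU).
have [sub1 _ _] := basis_hyperplaneP dimU.
split.
  apply: contraNneq notin0 => ->; apply: memv_span.
  by rewrite mem_cat (take_nth (GRing.zero : vT)) ?size_tuple 1?ltnW // mem_rcons mem_head.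
apply/eqP; rewrite eqEsubv subv_add sub0 sub1 /=.
rewrite -[X in (X <= _)%VS](span_basis (vbasisP U)) /basis_hyperplane.
have := size_tuple (vbasis U); case: (tval _) => [|x0 [|x1 R]] /= sizeU; try lia.
by rewrite !span_cons addvC addvS ?addvSl.
Qed.

End Hyperplanes.

Section MinDegreeSubgraph.
Variables (E T : finType) (a b : E -> T).
Implicit Types C D : {set E}.

Definition incident C (v : T) : {set E} := [set e in C | (a e == v) || (b e == v)].

Definition endpoints C : {set T} := a @: C :|: b @: C.

Lemma endpointsP C v : reflect (exists2 e, e \in C & (a e == v) || (b e == v))
  (v \in endpoints C).
Proof.
apply: (iffP setUP) => [[] /imsetP [e eC ->]|[e eC /orP [] /eqP <-]].
- by exists e; rewrite ?eqxx.
- by exists e; rewrite ?eqxx ?orbT.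
- by left; apply: imset_f.
- by right; apply: imset_f.
Qed.

Lemma endpoints_incident C v : v \in endpoints C -> 0 < #|incident C v|.
Proof.
by case/endpointsP => e eC ev; apply/card_gt0P; exists e; rewrite inE eC.
Qed.

(* Deleting the edges at a vertex of degree < t loses fewer than t edges and
   frees a vertex, so it increases the weight below. *)
Lemma min_degree_subgraph (t : nat) C : #|endpoints C| * t < #|C| ->
  exists2 D : {set E}, D \subset C &
    D != set0 /\ {in endpoints D, forall v, t <= #|incident D v|}.
Proof.
move=> denseC; pose weight D := #|D| + t * #|~: endpoints D|.
have weightC : t * #|T| < weight C.
  by have := cardsC (endpoints C); rewrite /weight; nia.
case: (@arg_maxnP _ C (fun D => D \subset C) weight (subxx C)) => D DC maxD.
exists D => //; split.
  apply: contraTneq (maxD C (subxx C)) => ->; rewrite -ltnNge.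
  move: weightC; rewrite /weight.
  have -> : endpoints set0 = set0 by rewrite /endpoints !imset0 setU0.
  by rewrite setC0 cards0 cardsT.
move=> v vD; rewrite leqNgt; apply/negP => lowv.
have subD : incident D v \subset D by apply/subsetP => e; rewrite inE => /andP [].
have endpD : endpoints (D :\: incident D v) \subset endpoints D :\ v.
  apply/subsetP => w; case/endpointsP => e; rewrite in_setD => /andP [inc eD] ew.
  rewrite in_setD1; apply/andP; split; last by apply/endpointsP; exists e.
  by apply: contraNneq inc => wv; rewrite inE eD -wv.
have moreC : #|~: endpoints D| < #|~: endpoints (D :\: incident D v)|.
  have := subset_leq_card endpD; have := cardsD1 v (endpoints D); rewrite vD.
  have := cardsC (endpoints D); have := cardsC (endpoints (D :\: incident D v)); lia.
have := maxD (D :\: incident D v) (subset_trans (subsetDl D _) DC); rewrite /weight.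
have := cardsD D (incident D v); rewrite (setIidPr subD).
have := subset_leq_card subD.
have := leq_mul2l t (#|~: endpoints D|.+1) #|~: endpoints (D :\: incident D v)|.
by rewrite moreC orbT mulnS; lia.
Qed.

End MinDegreeSubgraph.

Section NonBacktrackingWalks.
Variables (T : finType) (adj : rel T) (v0 : T).

(* Walks from [v0] are stored in reverse: the head is the last vertex visited. *)
Definition walk_end (s : seq T) : T := head v0 s.
Definition walk_prev (s : seq T) : T := head v0 (behead s).

Fixpoint nbwalk (s : seq T) : bool :=
  if s is x :: s' then [&& adj (walk_end s') x, x != walk_prev s' & nbwalk s'] else true.

Definition next_steps (s : seq T) : seq T :=
  enum [set x | adj (walk_end s) x && (x != walk_prev s)].

Fixpoint nbwalks (j : nat) : seq (seq T) :=
  if j is j'.+1 then [seq x :: s | s <- nbwalks j', x <- next_steps s] else [:: [::]].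

Lemma mem_nbwalks j s : s \in nbwalks j -> nbwalk s && (size s == j).
Proof.
elim: j s => [|j IHj] s /=; first by rewrite inE => /eqP ->.
case/allpairsPdep => s' [x [s'j + ->]]; rewrite mem_enum inE => /andP [adjx notprev].
by case/andP: (IHj s' s'j) => walks' /eqP <-; rewrite /= adjx notprev walks' eqxx.
Qed.

Lemma uniq_nbwalks j : uniq (nbwalks j).
Proof.
elim: j => //= j IHj; apply: allpairs_uniq_dep => // [s _|]; first exact: enum_uniq.
by move=> [s1 x1] [s2 x2] _ _ [-> ->].
Qed.

Lemma size_nbwalks (t : nat) j :
  (forall s, nbwalk s -> t <= #|[set x | adj (walk_end s) x]|) ->
  t.-1 ^ j <= size (nbwalks j).
Proof.
move=> degree; have steps s : nbwalk s -> t.-1 <= size (next_steps s).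
  move=> /degree; rewrite /next_steps -cardE.
  have := cardsD1 (walk_prev s) [set x | adj (walk_end s) x].
  have -> : [set x | adj (walk_end s) x && (x != walk_prev s)]
          = [set x | adj (walk_end s) x] :\ walk_prev s.
    by apply/setP => x; rewrite !inE andbC.
  by case: (_ \in _) => /=; lia.
elim: j => //= j IHj; rewrite size_allpairs_dep expnS.
apply: leq_trans (leq_mul (leqnn _) IHj) _.
elim: (nbwalks j) (@mem_nbwalks j) => [_|s l IHl inl] /=; first by rewrite muln0.
rewrite mulnS leq_add //; first by case/andP: (inl s (mem_head _ _)) => /steps.
by apply: IHl => s' s'l; apply: inl; rewrite inE s'l orbT.
Qed.

End NonBacktrackingWalks.

Section CoveringCode.
Variables (F : finFieldType) (n k delta alpha : nat).
Local Notation V := (subsp F n).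
Hypotheses (k_gt1 : 1 < k) (delta_gt : alpha - 2 < delta).
Variable C : {set V}.
Hypothesis codeC : is_covering_code k delta alpha C.

Lemma code_dim U : U \in C -> \dim U = k.
Proof.
by case/andP: codeC => /subsetP subC _ /subC; rewrite inE => /eqP.
Qed.

Lemma covering_code_span (T : {set V}) X : T \subset C -> #|T| = alpha ->
  {in T, forall U, (U <= X)%VS} -> k.-1 + alpha <= \dim X.
Proof.
case/andP: codeC => _ /forallP /(_ T) /implyP covT TC cardT TX.
have := covT; rewrite TC cardT eqxx => /(_ isT) spanT.
apply: leq_trans (leq_trans spanT (dimvS _)); first by move: k_gt1 delta_gt; lia.
exact/subv_sumP.
Qed.

(* Codewords through [W] each add at most one dimension to a space containing
   [W]; adding them to [T] until it has [alpha] elements reduces to the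
   covering property. *)
Lemma covering_dim_ge (W X : V) (T : {set V}) : \dim W = k.-1 ->
  alpha <= #|[set U in C | (W <= U)%VS]| -> T \subset C -> #|T| <= alpha ->
  (W <= X)%VS -> {in T, forall U, (U <= X)%VS} -> k.-1 + #|T| <= \dim X.
Proof.
move=> dimW fanW; have [m] := ubnP (alpha - #|T|).
elim: m T X => // m IHm T X ltm TC leTa WX TX.
have [ltTa|geTa] := ltnP #|T| alpha; last first.
  have cardT : #|T| = alpha by apply/eqP; rewrite eqn_leq leTa.
  by rewrite cardT (covering_code_span TC cardT TX).
have /subsetPn [U] : ~~ ([set U in C | (W <= U)%VS] \subset T).
  by apply: contraTN ltTa => /subset_leq_card; rewrite -leqNgt; exact: leq_trans fanW.
rewrite inE => /andP [UC WU] UT.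
have cardUT : #|U |: T| = #|T|.+1 by rewrite cardsU1 UT.
have dimXU : \dim (X + U) <= (\dim X).+1.
  by apply: (dimv_add_le_succ WX WU); rewrite code_dim // dimW prednK // ltnW.
have : k.-1 + #|U |: T| <= \dim (X + U).
  apply: IHm; rewrite ?cardUT ?subUset ?sub1set ?UC ?TC //.
  - by rewrite subnS; move: ltm ltTa; clear; lia.
  - exact: subv_trans WX (addvSl _ _).
  move=> U' /setU1P [->|/TX U'X]; [exact: addvSr | exact: subv_trans U'X (addvSl _ _)].
by rewrite cardUT addnS => /leq_trans /(_ dimXU); rewrite ltnS.
Qed.

Local Notation plane0 := (basis_hyperplane 0 : V -> V).
Local Notation plane1 := (basis_hyperplane 1 : V -> V).

Definition joins (U c x : V) : bool :=
  ((plane0 U == c) && (plane1 U == x)) || ((plane0 U == x) && (plane1 U == c)).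

Lemma joinsC U c x : joins U c x = joins U x c.
Proof. by rewrite /joins orbC. Qed.

Lemma code_planes U : U \in C ->
  [/\ plane0 U != plane1 U, (plane0 U + plane1 U)%VS = U,
      (plane0 U <= U)%VS, (plane1 U <= U)%VS
    & \dim (plane0 U) = k.-1 /\ \dim (plane1 U) = k.-1].
Proof.
move=> /code_dim dimU; have dimU1 : 1 < \dim U by rewrite dimU.
have [neq sum] := basis_hyperplane01 dimU1.
have [sub0 dim0 _] := basis_hyperplaneP (ltnW dimU1).
have [sub1 dim1 _] := basis_hyperplaneP dimU1.
by split; rewrite -?dimU.
Qed.

Lemma joinsP U c x : U \in C -> joins U c x ->
  [/\ U = (c + x)%VS, c != x, (c <= U)%VS & \dim c = k.-1 /\ \dim x = k.-1].
Proof.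
move=> /code_planes [neq sum sub0 sub1 [dim0 dim1]].
by case/orP=> /andP [/eqP <- /eqP <-]; rewrite ?(addvC (plane1 U)) ?sum // eq_sym.
Qed.

Lemma joins_inj U c c' x : U \in C -> joins U c x -> joins U c' x -> c = c'.
Proof.
move=> /code_planes [/eqP neq _ _ _ _].
by case/orP=> /andP [/eqP e0 /eqP e1] /orP [] /andP [/eqP e0' /eqP e1']; congruence.
Qed.

Section PrunedCode.
Variables (D : {set V}) (t : nat) (W0 : V).
Hypotheses (DC : D \subset C) (alpha_le_t : alpha <= t).
Local Notation endpointsD := (endpoints plane0 plane1 D).
Local Notation incidentD := (incident plane0 plane1 D).
Hypotheses (degD : {in endpointsD, forall v, t <= #|incidentD v|})
  (W0D : W0 \in endpointsD).

Definition adjD (c x : V) : bool := ((c + x)%VS \in D) && joins (c + x)%VS c x.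

Local Notation walk_end := (walk_end W0).
Local Notation nbwalk := (nbwalk adjD W0).

Definition walk_span (s : seq V) : V := foldr (fun x Y => (x + Y)%VS) W0 s.

Fixpoint walk_edges (s : seq V) : seq V :=
  if s is x :: s' then (walk_end s' + x)%VS :: walk_edges s' else [::].

Lemma adjDP c x : adjD c x -> (c + x)%VS \in C /\ joins (c + x)%VS c x.
Proof. by case/andP => /(subsetP DC). Qed.

Lemma endpointsD_dim v : v \in endpointsD -> \dim v = k.-1.
Proof.
case/endpointsP => U /(subsetP DC) /code_planes [_ _ _ _ [dim0 dim1]].
by case/orP => /eqP <-.
Qed.

Lemma incidentD_sub v U : U \in incidentD v -> U \in C /\ (v <= U)%VS.
Proof.
rewrite inE => /andP [/(subsetP DC) UC]; have [_ _ sub0 sub1 _] := code_planes UC.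
by case/orP => /eqP <-.
Qed.

Lemma walk_dim_ge (T : {set V}) X : T \subset C -> #|T| <= alpha ->
  (W0 <= X)%VS -> {in T, forall U, (U <= X)%VS} -> k.-1 + #|T| <= \dim X.
Proof.
apply: covering_dim_ge (endpointsD_dim W0D) _.
apply: leq_trans alpha_le_t (leq_trans (degD W0D) (subset_leq_card _)).
by apply/subsetP => U /incidentD_sub [UC W0U]; rewrite inE UC.
Qed.

Lemma W0_sub_span s : (W0 <= walk_span s)%VS.
Proof. by elim: s => //= x s; move/subv_trans; apply; exact: addvSr. Qed.

Lemma end_sub_span s : (walk_end s <= walk_span s)%VS.
Proof. by case: s => //= x s; exact: addvSl. Qed.

Lemma walk_edgesP s e : nbwalk s -> e \in walk_edges s -> e \in C /\ (e <= walk_span s)%VS.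
Proof.
elim: s => //= x s IHs /and3P [adjx _ walks]; rewrite inE => /orP [/eqP ->|es].
  split; first by case: (adjDP adjx).
  by rewrite subv_add addvSl (subv_trans (end_sub_span s)) ?addvSr.
have [eC eY] := IHs walks es; split => //; exact: subv_trans eY (addvSr _ _).
Qed.

Lemma size_walk_edges s : size (walk_edges s) = size s.
Proof. by elim: s => //= x s ->. Qed.

Lemma card_walk_edges s : uniq (walk_edges s) -> #|[set u in walk_edges s]| = size s.
Proof. by move=> uniqs; rewrite cardsE (card_uniqP uniqs) size_walk_edges. Qed.

Definition walk_fresh (s : seq V) : bool :=
  if s is x :: s' then ~~ (x <= walk_span s')%VS else true.

Lemma new_edge_notin x s : nbwalk (x :: s) -> walk_fresh s ->
  (walk_end s + x)%VS \notin walk_edges s.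
Proof.
case: s => //= y r /and3P [adjx notprev /and3P [adjy _ walkr]] freshy.
have [eC joinsx] := adjDP adjx; have [_ joinsy] := adjDP adjy.
rewrite inE negb_or; apply/andP; split.
  apply: contra notprev => /eqP sameE; apply/eqP; rewrite -sameE in joinsy.
  by apply: joins_inj eC _ joinsy; rewrite joinsC.
by apply: contra freshy => /(walk_edgesP walkr) [_]; exact: subv_trans (addvSl y x).
Qed.

Lemma nbwalk_span s : nbwalk s -> size s <= alpha ->
  [/\ \dim (walk_span s) = k.-1 + size s, uniq (walk_edges s) & walk_fresh s].
Proof.
elim: s => [|x s IHs] walkxs sizes; first by rewrite /= (endpointsD_dim W0D) addn0.
case/and3P: (walkxs) => adjx _ walks; have [dimY uniqs fresh] := IHs walks (ltnW sizes).
have [eC joinsx] := adjDP adjx; have [_ _ _ [dimEnd _]] := joinsP eC joinsx.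
have uniqxs : uniq (walk_edges (x :: s)).
  by rewrite /= (new_edge_notin walkxs fresh) uniqs.
have dim_le : \dim (x + walk_span s) <= (\dim (walk_span s)).+1.
  apply: leq_trans (dimvS _) (dimv_add_le_succ (end_sub_span s) (addvSl _ x) _).
    by rewrite subv_add addvSl (subv_trans (addvSr (walk_end s) x)) ?addvSr.
  by rewrite (code_dim eC) dimEnd prednK // ltnW.
have dim_ge : k.-1 + (size s).+1 <= \dim (x + walk_span s).
  rewrite -[(size s).+1](card_walk_edges uniqxs).
  apply: walk_dim_ge; rewrite ?card_walk_edges ?(W0_sub_span (x :: s)) //.
    by apply/subsetP => U; rewrite inE => /(walk_edgesP walkxs) [].
  by move=> U; rewrite inE => /(walk_edgesP walkxs) [].
have dimxs : \dim (x + walk_span s) = k.-1 + (size s).+1.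
  by apply/eqP; rewrite eqn_leq dim_ge addnS -dimY dim_le.
split=> //; apply/negP => /addv_idPr xY.
by move/eqP: dimxs; rewrite xY dimY addnS eqn_leq ltnn andbF.
Qed.

Lemma fresh_edge_notin s c x : nbwalk s -> ~~ (x <= walk_span s)%VS ->
  (c + x)%VS \notin walk_edges s.
Proof.
move=> walks; apply: contra => /(walk_edgesP walks) [_]; exact: subv_trans (addvSr c x).
Qed.

(* Two diverging walks of length [j+1] ending at [x] would give [2(j+1)] edges,
   spanning too little: their spans meet in a space strictly larger than the
   span of the common edges, since it contains [x]. *)
Lemma nbwalk_prev_unique x r r' : nbwalk (x :: r) -> nbwalk (x :: r') ->
  size r = size r' -> 2 * (size r).+1 <= alpha -> walk_end r = walk_end r'.
Proof.
move=> walkxr walkxr' sizerr' size2; apply/eqP/negPn/negP => neq.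
have sizexr : size (x :: r) <= alpha by apply: leq_trans size2; rewrite leq_pmull.
have sizexr' : size (x :: r') <= alpha by rewrite /= -sizerr'.
have [dimY uniqE freshr] := nbwalk_span walkxr sizexr.
have [dimY' uniqE' freshr'] := nbwalk_span walkxr' sizexr'.
case/and3P: (walkxr) => adjx _ walkr; case/and3P: (walkxr') => adjx' _ walkr'.
set E := [set u in walk_edges (x :: r)]; set E' := [set u in walk_edges (x :: r')].
have cardE : #|E| = (size r).+1 by rewrite card_walk_edges.
have cardE' : #|E'| = (size r).+1 by rewrite card_walk_edges //= sizerr'.
have common u : u \in E :&: E' -> u \in walk_edges r.
  rewrite !inE /= => /andP [/orP [/eqP ue|//] /orP [/eqP ue'|ur']].
    have [eC joinsx] := adjDP adjx; have [_ joinsx'] := adjDP adjx'.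
    by case/negP: neq; apply/eqP/(joins_inj eC joinsx); rewrite -ue ue'.
  by move: ur'; rewrite ue (negbTE (fresh_edge_notin _ walkr' freshr')).
set Y := walk_span (x :: r); set Y' := walk_span (x :: r').
have edgesY u : u \in E -> u \in C /\ (u <= Y)%VS.
  by rewrite inE; apply: walk_edgesP.
have edgesY' u : u \in E' -> u \in C /\ (u <= Y')%VS.
  by rewrite inE; apply: walk_edgesP.
have dim_sum : k.-1 + #|E :|: E'| <= \dim (Y + Y').
  apply: walk_dim_ge; first by apply/subsetP => u /setUP [/edgesY|/edgesY'] [].
  - by rewrite (leq_trans (leq_card_setU _ _)) // cardE cardE' addnn -mul2n.
  - exact: subv_trans (W0_sub_span _) (addvSl _ _).
  - move=> u /setUP [/edgesY [_ uY]|/edgesY' [_ uY']].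
      exact: subv_trans uY (addvSl _ _).
    exact: subv_trans uY' (addvSr _ _).
have dim_cap : k.-1 + #|E :&: E'| <= \dim (Y :&: Y' :&: walk_span r).
  apply: walk_dim_ge.
  - by apply/subsetP => u /setIP [/edgesY []].
  - by rewrite (leq_trans (subset_leq_card (subsetIl _ _))) // cardE.
  - by rewrite !subv_cap !W0_sub_span.
  - move=> u uEE'; have /setIP [/edgesY [_ uY] /edgesY' [_ uY']] := uEE'.
    by rewrite !subv_cap uY uY' (proj2 (walk_edgesP walkr (common u uEE'))).
have cap_lt : \dim (Y :&: Y' :&: walk_span r) < \dim (Y :&: Y').
  rewrite ltn_neqAle dimvS ?capvSl // andbT; apply: contra freshr => /eqP eqdim.
  have eqZ : (Y :&: Y' :&: walk_span r)%VS = (Y :&: Y')%VS.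
    by apply/eqP; rewrite eqEdim capvSl eqdim leqnn.
  apply: subv_trans (capvSr (Y :&: Y') _).
  by rewrite eqZ subv_cap /Y /Y' /= !addvSl.
have := leq_add dim_sum (leq_ltn_trans dim_cap cap_lt).
rewrite addnS addnACA cardsUI dimv_sum_cap dimY dimY' cardE cardE' /= -sizerr'.
by rewrite addnACA ltnn.
Qed.

Lemma nbwalk_end_inj s s' : nbwalk s -> nbwalk s' -> size s = size s' ->
  2 * size s <= alpha -> walk_end s = walk_end s' -> s = s'.
Proof.
elim: s s' => [|x r IHr] [|x' r'] //= walkxr walkxr' [sizerr'] size2 xx'; subst x'.
have prevrr' := nbwalk_prev_unique walkxr walkxr' sizerr' size2.
case/and3P: walkxr => _ _ walkr; case/and3P: walkxr' => _ _ walkr'.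
rewrite (IHr r' walkr walkr' sizerr' _ prevrr') //.
by apply: leq_trans size2; rewrite leq_mul2l leqnSn orbT.
Qed.

Lemma incidentD_adj c : #|incidentD c| <= #|[set x | adjD c x]|.
Proof.
pose other U := if plane0 U == c then plane1 U else plane0 U.
have otherP U : U \in incidentD c -> U = (c + other U)%VS /\ adjD c (other U).
  rewrite inE /other => /andP [UD cU]; have UC := subsetP DC U UD.
  have joinsU : joins U c (other U).
    rewrite /other /joins; case: (eqVneq (plane0 U) c) cU => [-> _|_ /= /eqP ->];
    by rewrite !eqxx ?orbT.
  by have [eqU _ _ _] := joinsP UC joinsU; rewrite /adjD -eqU UD.
rewrite -(card_in_imset (f := other)); last first.
  by move=> U U' /otherP [eqU _] /otherP [eqU' _] eqo; rewrite eqU eqU' eqo.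
by apply/subset_leq_card/subsetP => _ /imsetP [U /otherP [_ adjU] ->]; rewrite inE.
Qed.

Lemma walk_end_endpoint s : nbwalk s -> walk_end s \in endpointsD.
Proof.
case: s => [_|x s /and3P [/andP [eD joinsx] _ _]]; first exact: W0D.
apply/endpointsP; exists (walk_end s + x)%VS => //.
by case/orP: joinsx => /andP [/eqP -> /eqP ->]; rewrite eqxx ?orbT.
Qed.

Lemma moore_bound m : 2 * m <= alpha -> t.-1 ^ m <= #|grassmannian F n k.-1|.
Proof.
move=> m2; have : t.-1 ^ m <= size (nbwalks adjD W0 m).
  apply: size_nbwalks => s /walk_end_endpoint endpoint.
  exact: leq_trans (degD endpoint) (incidentD_adj _).
move/leq_trans; apply; rewrite -(size_map walk_end) cardE uniq_leq_size //.
  rewrite map_inj_in_uniq ?uniq_nbwalks // => s s' /mem_nbwalks /andP [walks /eqP sizes].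
  case/mem_nbwalks/andP => walks' /eqP sizes'; apply: nbwalk_end_inj => //.
    by rewrite sizes sizes'.
  by rewrite sizes.
move=> _ /mapP [s /mem_nbwalks /andP [walks _] ->]; rewrite mem_enum inE.
by rewrite (endpointsD_dim (walk_end_endpoint walks)).
Qed.

End PrunedCode.

Lemma covering_code_card (t m : nat) : alpha <= t -> 2 * m <= alpha ->
  #|grassmannian F n k.-1| < t.-1 ^ m -> #|C| <= #|grassmannian F n k.-1| * t.
Proof.
move=> alpha_le_t m2 fewG; rewrite leqNgt; apply: contraTN fewG => manyC.
have endpointsG : endpoints plane0 plane1 C \subset grassmannian F n k.-1.
  apply/subsetP => v /endpointsP [U /code_planes [_ _ _ _ [dim0 dim1]]].
  by rewrite inE; case/orP => /eqP <-; apply/eqP.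
have [|D DC [/set0Pn [U UD] degD]] := @min_degree_subgraph _ _ plane0 plane1 t C.
  by apply: leq_ltn_trans manyC; rewrite leq_mul2r subset_leq_card ?orbT.
have W0D : plane0 U \in endpoints plane0 plane1 D.
  by apply/endpointsP; exists U; rewrite ?eqxx.
by rewrite -leqNgt (moore_bound DC alpha_le_t degD W0D m2).
Qed.

End CoveringCode.

Lemma card_grassmannian_le (F : finFieldType) (n d : nat) :
  #|grassmannian F n d| <= #|F| ^ (n * d).
Proof.
pose basis_fun (W : subsp F n) :=
  [ffun i : 'I_d => nth (GRing.zero : 'rV[F]_n) (vbasis W) i].
have inj : {in grassmannian F n d &, injective basis_fun}.
  move=> W W'; rewrite !inE => /eqP dimW /eqP dimW' eqf.
  rewrite -(span_basis (vbasisP W)) -(span_basis (vbasisP W')); congr <<_>>%VS.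
  apply: (@eq_from_nth _ (GRing.zero : 'rV[F]_n)); rewrite !size_tuple ?dimW ?dimW' //.
  move=> i ltiW; have lti : i < d by rewrite -dimW.
  by have := congr1 (fun f : {ffun 'I_d -> 'rV[F]_n} => f (Ordinal lti)) eqf; rewrite !ffunE.
rewrite -(card_in_imset inj) (leq_trans (max_card _)) //.
by rewrite card_ffun card_mx card_ord mul1n expnM.
Qed.

Lemma B_cov_le (F : finFieldType) (n k delta alpha : nat) :
  1 < k -> 1 < alpha -> alpha - 2 < delta ->
  B_cov F n k delta alpha <=
    #|F| ^ (n * (k - 1)) * (#|F| ^ ((k - 1) * n %/ (alpha %/ 2)).+1 + alpha).
Proof.
move=> k_gt1 alpha_gt1 delta_gt; set m := alpha %/ 2; set r := ((k - 1) * n %/ m).+1.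
have q_gt1 : 1 < #|F| := finNzRing_gt1 F.
have m_gt0 : 0 < m by rewrite divn_gt0.
have cardG : #|grassmannian F n k.-1| <= #|F| ^ (n * (k - 1)).
  by rewrite subn1 card_grassmannian_le.
apply/bigmax_leqP => C codeC.
apply: leq_trans (covering_code_card k_gt1 delta_gt codeC (leq_addl (#|F| ^ r) alpha) _ _) _.
- by rewrite mulnC; exact: leq_divM.
- apply: leq_ltn_trans cardG _.
  have : #|F| ^ (n * (k - 1)) < (#|F| ^ r) ^ m.
    by rewrite -expnM ltn_exp2l // [n * _]mulnC ltn_ceil.
  by move/leq_trans; apply; rewrite leq_exp2r // -subn1 -addnBA ?leq_addr // ltnW.
- by rewrite leq_mul2r cardG orbT.
Qed.

Lemma INR_expn (a j : nat) : INR (a ^ j) = (INR a ^ j)%R.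
Proof. by elim: j => // j IHj; rewrite expnS mult_INR IHj. Qed.

Lemma INR_expn_divn_le (q a m : nat) : 0 < q -> 0 < m ->
  (INR (q ^ (a %/ m)) <= Rpower (INR q) (INR a / INR m))%R.
Proof.
move=> q_gt0 m_gt0; have m_pos : (0 < INR m)%R by apply/lt_0_INR/ltP.
rewrite INR_expn -Rpower_pow; last exact/lt_0_INR/ltP.
apply: Rle_Rpower; first by apply: (le_INR 1); apply/leP.
apply: (Rmult_le_reg_r (INR m)) => //; rewrite -mult_INR.
have -> : (INR a / INR m * INR m = INR a)%R by field; lra.
by apply/le_INR/leP/leq_divM.
Qed.

Lemma INR_pow_bound (q a b m c : nat) : 0 < q -> 0 < m ->
  (INR (q ^ b * (q ^ (a %/ m).+1 + c))
     <= (INR q + INR c) * Rpower (INR q) (INR b + INR a / INR m))%R.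
Proof.
move=> q_gt0 m_gt0; have q_pos : (0 < INR q)%R by apply/lt_0_INR/ltP.
have m_pos : (0 < INR m)%R by apply/lt_0_INR/ltP.
set P := Rpower (INR q) (INR a / INR m).
have P_ge1 : (1 <= P)%R.
  rewrite -(Rpower_O (INR q)) //; apply: Rle_Rpower; first by apply: (le_INR 1); apply/leP.
  by apply: Rmult_le_pos; [apply: pos_INR | apply/Rlt_le/Rinv_0_lt_compat].
have powP := INR_expn_divn_le a q_gt0 m_gt0; rewrite -/P in powP.
rewrite mult_INR plus_INR expnS mult_INR Rpower_plus -/P (INR_expn q b) -Rpower_pow //.
rewrite (Rmult_comm _ (Rpower _ _ * P)) Rmult_assoc.
apply: Rmult_le_compat_l; first exact/Rlt_le/exp_pos.
have := Rmult_le_compat_l _ _ _ (Rlt_le _ _ q_pos) powP.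
have := Rmult_le_compat_l _ _ _ (pos_INR c) P_ge1; lra.
Qed.

Theorem mainTheorem7 (F : finFieldType) (k delta alpha : nat) :
  (2 <= k)%N -> (3 <= alpha)%N -> (0 < delta)%N -> (alpha - 2 < delta)%N ->
  exists c : R, Rlt 0 c /\
  exists N : nat, forall n : nat, (N <= n)%N ->
    Rle (INR (B_cov F n k delta alpha))
        (Rmult c (Rpower (INR #|F|)
                   (Rmult (Rmult (Rplus 1 (Rinv (INR (alpha %/ 2))))
                                 (INR (k - 1))) (INR n)))).
Proof.
move=> k_gt1 alpha_ge3 _ delta_gt.
have q_gt0 : 0 < #|F| := ltnW (finNzRing_gt1 F).
have m_pos : (0 < INR (alpha %/ 2))%R.
  by apply/lt_0_INR/ltP; rewrite divn_gt0 // ltnW.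
exists (INR #|F| + INR alpha)%R; split.
  by have := pos_INR alpha; have := lt_0_INR _ (ltP q_gt0); lra.
exists 0 => n _; have := B_cov_le F n k_gt1 (ltnW alpha_ge3) delta_gt.
move=> /leP /le_INR /Rle_trans; apply.
have -> : ((1 + / INR (alpha %/ 2)) * INR (k - 1) * INR n
          = INR (n * (k - 1)) + INR ((k - 1) * n) / INR (alpha %/ 2))%R.
  by rewrite !mult_INR; field; lra.
by apply: INR_pow_bound; rewrite // divn_gt0 // ltnW.
Qed.
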